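(* Let $\mathbb{F}$ be a field, $T_1,T_2\subseteq\mathbb{F}$ sets of size $n$, and $d,\ell,s,r$ natural numbers with $d\ge\ell$ and $r=s-\lfloor\frac{d-\ell}{n}\rfloor$. Let $f\colon T_1\times T_2\to\mathbb{F}_{<s}[z_1,z_2]$, and let $P=\sum_{i=\ell}^dP_i(x_1)x_2^{d-i}$ be a polynomial of total degree at most $d$ (so $\deg P_i\le i$) with $\Delta^{(s)}_{\mathrm{mult}}(f,\mathrm{Enc}^{(s)}_{T_1\times T_2}(P))<\frac12n^2(s-\frac dn)$. With $g\colon T_1\to\mathbb{F}_{<r}[z_1]$ and $w\colon T_1\times[r]\to\mathbb{Z}_{\ge0}$ defined from $f$ as below, \[\Gamma^{s,d,\ell}_w(g,P_\ell)\le\Delta^{(s)}_{\mathrm{mult}}\big(f,\mathrm{Enc}^{(s)}_{T_1\times T_2}(P)\big)<\frac12n^2\Big(s-\frac dn\Big).\]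
   Context: Encodings: $\mathrm{Enc}^{(s)}_{T_1\times T_2}(P)(a,b)=P(a+z_1,b+z_2)\bmod\langle z_1,z_2\rangle^s$; for univariate $G$ and $t\ge1$, $\mathrm{Enc}^{(t)}_{T_2}(G)(b)=G(b+z_2)\bmod z_2^t$. $d^{(t)}_{\min}(Q)$ is the minimum of $t$ and the lowest degree of a monomial with nonzero coefficient in $Q$ ($t$ if $Q=0$); $\Delta^{(t)}_{\mathrm{mult}}(f,g)=\sum_{\mathbf a}(t-d^{(t)}_{\min}(f(\mathbf a)-g(\mathbf a)))$ over the domain. Write $f(a,b)=\sum_{i,j}f_{(i,j)}(a,b)z_1^iz_2^j$. For $a\in T_1$ and $i\in[r]=\{0,\dots,r-1\}$, let $f^{(i,a)}\colon T_2\to\mathbb{F}_{<s-i}[z_2]$, $f^{(i,a)}(b)=\sum_{j\in[s-i]}f_{(i,j)}(a,b)z_2^j$. Let $G^{(i,a)}\in\mathbb{F}_{\le d-\ell}[x_2]$ be the (unique) polynomial of degree $\le d-\ell$ with $\Delta^{(s-i)}_{\mathrm{mult}}(f^{(i,a)},\mathrm{Enc}^{(s-i)}(G^{(i,a)}))<\frac12((s-i)n-(d-\ell))$ if one exists, and $G^{(i,a)}=0$ otherwise. Set $w(a,i)=\min\{\Delta^{(s-i)}_{\mathrm{mult}}(f^{(i,a)},\mathrm{Enc}^{(s-i)}(G^{(i,a)})),\frac n2((s-i)-\frac{d-\ell}{n})\}$ and $g(a)=\sum_{i\in[r]}\mathrm{Coeff}_{x_2^{d-\ell}}(G^{(i,a)})z_1^i$.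 Finally, with $A_i(g,R)=\{a\in T_1:\max\{j\in[r+1]:g(a)\equiv R(a+z_1)\bmod\langle z_1\rangle^j\}=i\}$ for $i\in[r+1]$, $\Gamma^{s,d,\ell}_w(g,R)=\sum_{i=0}^{r-1}\sum_{a\in A_i(g,R)}\max\{n((s-i)-\frac{d-\ell}{n})-w(a,i),\max_{j<i}w(a,j)\}+\sum_{a\in A_r(g,R)}\max_{j<r}w(a,j)$ (empty maxima ignored). *)

From HB Require Import structures.
From mathcomp Require Import all_boot all_order all_algebra.
From Stdlib Require Import ClassicalEpsilon.
Set Implicit Arguments. Unset Strict Implicit. Unset Printing Implicit Defensive.
Import Order.TTheory GRing.Theory Num.Theory.
Local Open Scope ring_scope.

Section MultCodes.
Variable F : fieldType.

(* A truncated bivariate polynomial in F_{<s}[z1,z2] is represented by its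
   coefficient function (i, j) |-> coefficient of z1^i z2^j;
   only coefficients with i + j < s are meaningful. *)

Definition dmin2 (s : nat) (Q : nat -> nat -> F) : nat :=
  \big[minn/s]_(i < s) \big[minn/s]_(j < s - i)
     (if Q i j != 0 then (i + j)%N else s).

Definition dmin1 (t : nat) (Q : nat -> F) : nat :=
  \big[minn/t]_(j < t) (if Q j != 0 then (j : nat) else t).

Definition Delta2 (s : nat) (T1 T2 : seq F) (f g : F -> F -> nat -> nat -> F) : nat :=
  \sum_(a <- T1) \sum_(b <- T2) subn s (dmin2 s (fun i j => (f a b i j - g a b i j)%R)).

Definition Delta1 (t : nat) (T2 : seq F) (f g : F -> nat -> F) : nat :=
  \sum_(b <- T2) subn t (dmin1 t (fun j => (f b j - g b j)%R)).

(* P(a + z1, b + z2) for P in {poly {poly F}}: outer variable x2,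
   coefficients are polynomials in x1. *)
Definition shift2 (P : {poly {poly F}}) (a b : F) : {poly {poly F}} :=
  (map_poly (fun q : {poly F} => q \Po ('X + a%:P)) P) \Po ('X + (b%:P)%:P).

Definition Enc2 (s : nat) (P : {poly {poly F}}) (a b : F) (i j : nat) : F :=
  if (i + j < s)%N then ((shift2 P a b)`_j)`_i else 0.

Definition Enc1 (t : nat) (G : {poly F}) (b : F) (j : nat) : F :=
  if (j < t)%N then (G \Po ('X + b%:P))`_j else 0.

Variables (T1 T2 : seq F) (n d l s r : nat) (f : F -> F -> nat -> nat -> F).

Definition fia (i : nat) (a : F) : F -> nat -> F :=
  fun b j => if (j < s - i)%N then f a b i j else 0.

Definition goodG (i : nat) (a : F) (G : {poly F}) : Prop :=
  (size G <= (d - l).+1)%N /\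
  ((Delta1 (s - i) T2 (fia i a) (Enc1 (s - i) G))%:R : rat)
     < (1/2) * (((s - i)%N)%:R * n%:R - ((d - l)%N)%:R).

(* G^{(i,a)}: a (the unique) polynomial satisfying goodG if one exists, else 0 *)
Definition Gia (i : nat) (a : F) : {poly F} :=
  match excluded_middle_informative (exists G, goodG i a G) with
  | left e => proj1_sig (constructive_indefinite_description _ e)
  | right _ => 0
  end.

Definition wt (a : F) (i : nat) : rat :=
  Num.min ((Delta1 (s - i) T2 (fia i a) (Enc1 (s - i) (Gia i a)))%:R)
          ((n%:R / 2) * (((s - i)%N)%:R - ((d - l)%N)%:R / n%:R)).

Definition gfun (a : F) (k : nat) : F :=
  if (k < r)%N then (Gia k a)`_(d - l) else 0.

Definition agreeLen (R : {poly F}) (a : F) : nat :=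
  (\max_(j < r.+1 | [forall k : 'I_j, (gfun a k == (R \Po ('X + a%:P))`_k)%R]) (j : nat))%N.

(* max_{j<i} w(a,j), for i > 0 *)
Definition maxprev (a : F) (i : nat) : rat :=
  \big[Num.max/wt a 0]_(j < i) wt a j.

(* Gamma^{s,d,l}_w(g, R); empty maxima are ignored *)
Definition Gamma (R : {poly F}) : rat :=
  \sum_(i < r) \sum_(a <- T1 | agreeLen R a == i)
      (let X := n%:R * (((s - i)%N)%:R - ((d - l)%N)%:R / n%:R) - wt a i in
       if (i : nat) == 0%N then X else Num.max X (maxprev a i))
  + \sum_(a <- T1 | agreeLen R a == r)
      (if r == 0%N then 0 else maxprev a r).

End MultCodes.

From Stdlib Require Import Classical ClassicalEpsilon.
From HB Require Import structures.
From mathcomp Require Import all_boot all_order all_algebra.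
From mathcomp Require Import ring lra zify.
Set Implicit Arguments. Unset Strict Implicit. Unset Printing Implicit Defensive.
Import Order.TTheory GRing.Theory Num.Theory.
Local Open Scope ring_scope.

(** The distance of [f] to [Enc(P)] is a sum of row distances Δ_a, a ∈ T1.
    For i < s, the z1^i-slice of [Enc(P)] at [a] is the univariate encoding of
    the z1^i-coefficient Q_{a,i} of P(a + z1, x2), a polynomial of degree at
    most d - ℓ, and its distance to f^{(i,a)} is at most Δ_a.  A nonzero
    polynomial has at most its degree many roots counted with multiplicity, so
    the univariate multiplicity code has distance (s - i)n - (d - ℓ).  Hence
    unique decoding gives w(a,i) <= Δ_a, and at the first index i where g(a)
    disagrees with P_ℓ(a + z1) the decoded G^{(i,a)} differs from Q_{a,i}, so
    the triangle inequality gives n(s - i) - (d - ℓ) - w(a,i) <= Δ_a.  Every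
    term of Γ indexed by [a] is thus at most Δ_a. *)

Section TruncatedValuation.
Variable F : fieldType.
Implicit Types (t : nat) (Q : nat -> F) (T : seq F) (h g k : F -> nat -> F).

Lemma dmin1_le t Q : (dmin1 t Q <= t)%N.
Proof. by rewrite /dmin1 -minEnat; apply: (@bigmin_le_id _ nat). Qed.

Lemma dmin1_coef_eq0 t Q j : (j < dmin1 t Q)%N -> Q j = 0.
Proof.
move=> lt_j; have lt_jt : (j < t)%N := leq_trans lt_j (dmin1_le t Q).
apply/eqP; apply: contraTT lt_j => Qj; rewrite -leqNgt.
have := @bigmin_le _ nat _ t (Ordinal lt_jt)
  (fun i : 'I_t => if Q i != 0 then (i : nat) else t).
by rewrite /= Qj.
Qed.

Lemma dmin1_ge t Q m : (m <= t)%N -> (forall j, (j < m)%N -> Q j = 0) ->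
  (m <= dmin1 t Q)%N.
Proof.
move=> le_mt Q0; rewrite /dmin1 -minEnat; apply: (@le_bigmin _ nat) => // i _.
by case: eqP => // /eqP; apply: contraNle => /Q0 ->.
Qed.

Lemma eq_dmin1 t Q Q' : (forall j, (j < t)%N -> (Q j != 0) = (Q' j != 0)) ->
  dmin1 t Q = dmin1 t Q'.
Proof. by move=> eqQ; apply: eq_bigr => i _; rewrite eqQ. Qed.

Lemma Delta1C t T h g : Delta1 t T h g = Delta1 t T g h.
Proof.
apply: eq_bigr => b _; congr (_ - _)%N.
by apply: eq_dmin1 => j _; rewrite -opprB oppr_eq0.
Qed.

Lemma Delta1_triangle t T h g k :
  (Delta1 t T h g <= Delta1 t T h k + Delta1 t T k g)%N.
Proof.
rewrite /Delta1 -big_split /=; apply: leq_sum => b _.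
set x := dmin1 t _; set y := dmin1 t _; set z := dmin1 t _.
have le_yt : (y <= t)%N := dmin1_le _ _.
have le_zt : (z <= t)%N := dmin1_le _ _.
suff : (minn y z <= x)%N by lia.
apply: dmin1_ge => [|j]; first by rewrite geq_min le_yt.
rewrite leq_min => /andP[/dmin1_coef_eq0 hk0 /dmin1_coef_eq0 kg0].
by rewrite -(subrK (k b j) (h b j)) -addrA hk0 kg0 addr0.
Qed.

End TruncatedValuation.

Section MultiplicityCodeDistance.
Variable F : fieldType.
Implicit Types (t m : nat) (T : seq F) (G H : {poly F}) (b : F).

Lemma Enc1B t G G' b j : Enc1 t G b j - Enc1 t G' b j = Enc1 t (G - G') b j.
Proof. by rewrite /Enc1; case: ifP; rewrite ?subr0 // comp_polyB coefB. Qed.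

Lemma exp_XsubC_dvdp_dmin1 t H b : ('X - b%:P) ^+ dmin1 t (Enc1 t H b) %| H.
Proof.
set k := dmin1 t _; set p := H \Po ('X + b%:P).
have lt_kt : (k <= t)%N := dmin1_le _ _.
have p_low : take_poly k p = 0.
  apply/polyP => j; rewrite coef_take_poly coef0; case: ifP => // lt_jk.
  by have := dmin1_coef_eq0 lt_jk; rewrite /Enc1 (leq_trans lt_jk lt_kt).
have -> : H = p \Po ('X - b%:P) by rewrite comp_polyXaddC_K.
rewrite -(poly_take_drop k p) p_low add0r comp_polyM comp_Xn_poly.
exact: dvdp_mull.
Qed.

Lemma size_prod_exp_XsubC T (k : F -> nat) :
  size (\prod_(b <- T) ('X - b%:P) ^+ k b) = (\sum_(b <- T) k b).+1.
Proof.
elim: T => [|c T IH]; first by rewrite !big_nil size_poly1.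
rewrite !big_cons size_mul ?IH ?size_exp_XsubC ?addnS //.
  by rewrite -size_poly_eq0 size_exp_XsubC.
by rewrite -size_poly_eq0 IH.
Qed.

Lemma prod_exp_XsubC_dvdp T (k : F -> nat) H : uniq T ->
  (forall b, b \in T -> ('X - b%:P) ^+ k b %| H) ->
  \prod_(b <- T) ('X - b%:P) ^+ k b %| H.
Proof.
elim: T => [|c T IH] /=; first by rewrite big_nil dvd1p.
move=> /andP[cT uT] dvdH; rewrite big_cons Gauss_dvdp.
  by rewrite dvdH ?mem_head // IH // => b bT; rewrite dvdH // inE bT orbT.
apply/coprimep_expl; rewrite coprimep_sym coprimep_XsubC rootE horner_prod.
rewrite prodf_seq_neq0; apply/allP => b bT /=.
by rewrite horner_exp hornerXsubC expf_neq0 // subr_eq0; apply: contraNneq cT => ->.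
Qed.

Lemma sum_dmin1_Enc1_le t T H : uniq T -> H != 0 ->
  (\sum_(b <- T) dmin1 t (Enc1 t H b) <= (size H).-1)%N.
Proof.
move=> uT H0; have := dvdp_leq H0 (prod_exp_XsubC_dvdp uT
  (fun b _ => exp_XsubC_dvdp_dmin1 t H b)).
by rewrite size_prod_exp_XsubC; case: (size H).
Qed.

Lemma Delta1_Enc1_ge t m T G G' : uniq T -> G != G' ->
  (size G <= m.+1)%N -> (size G' <= m.+1)%N ->
  (t * size T - m <= Delta1 t T (Enc1 t G) (Enc1 t G'))%N.
Proof.
move=> uT neqG szG szG'.
have D0 : G - G' != 0 by rewrite subr_eq0.
have szD : (size (G - G')%R <= m.+1)%N.
  by rewrite (leq_trans (size_add _ _)) // size_opp geq_max szG.
have -> : Delta1 t T (Enc1 t G) (Enc1 t G') =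
          (\sum_(b <- T) (t - dmin1 t (Enc1 t (G - G') b)))%N.
  by apply: eq_bigr => b _; congr (_ - _)%N; apply: eq_dmin1 => j _; rewrite Enc1B.
rewrite sumnB => [|b _]; last exact: dmin1_le.
rewrite big_const_seq count_predT iter_addn_0 mulnC.
have := sum_dmin1_Enc1_le t uT D0; lia.
Qed.
End MultiplicityCodeDistance.

Section ShiftedCoefficients.
Variable F : fieldType.

Lemma dmin2_le_dmin1_row s (D : nat -> nat -> F) i : (i < s)%N ->
  (dmin2 s D <= i + dmin1 (s - i) (D i))%N.
Proof.
move=> lt_is; apply: leq_trans (@bigmin_le _ nat _ s (Ordinal lt_is) _) _ => /=.
apply: (big_ind2 (fun x y => x <= i + y)%N) => [|x1 x2 y1 y2 le1 le2 | j _].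
- by rewrite subnKC // ltnW.
- by rewrite addn_minr leq_min !geq_min le1 le2 orbT.
- by case: ifP => // _; rewrite subnKC // ltnW.
Qed.

Lemma coef_comp_poly_XaddCC (R : {poly {poly F}}) (c : F) i j :
  ((R \Po ('X + (c%:P)%:P))`_j)`_i =
  (map_poly (fun q : {poly F} => q`_i) R \Po ('X + c%:P))`_j.
Proof.
have szR : (size (map_poly (fun q : {poly F} => q`_i)%R R) <= size R)%N.
  exact: size_poly.
rewrite -map_polyXaddC !coef_comp_poly.
rewrite (big_ord_widen (size R)
  (fun k => (map_poly (fun q : {poly F} => q`_i) R)`_k * (('X + c%:P) ^+ k)`_j) szR).
rewrite [RHS]big_mkcond coef_sum; apply: eq_bigr => k _.
rewrite -rmorphXn coef_map /= coefMC.
have -> : R`_k`_i = (map_poly (fun q : {poly F} => q`_i) R)`_k.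
  by rewrite coef_map_id0 ?coef0.
by case: ltnP => // /(nth_default 0) ->; rewrite mul0r.
Qed.

End ShiftedCoefficients.

Section UniqueDecoding.
Variables (F : fieldType) (T2 : seq F) (n d l s : nat) (f : F -> F -> nat -> nat -> F).
Hypotheses (uniq_T2 : uniq T2) (size_T2 : size T2 = n) (n_gt0 : (0 < n)%N).
Implicit Types (i : nat) (a : F) (G Q : {poly F}).

Local Notation dist i a Q := (Delta1 (s - i) T2 (fia s f i a) (Enc1 (s - i) Q)).
Local Notation code_dist i := (((s - i)%N)%:R * n%:R - ((d - l)%N)%:R : rat).
Local Notation G_ i a := (Gia T2 n d l s f i a).

Lemma dist_pair_ge i a G G' : G != G' ->
  (size G <= (d - l).+1)%N -> (size G' <= (d - l).+1)%N ->
  code_dist i <= (dist i a G)%:R + (dist i a G')%:R.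
Proof.
move=> neqG szG szG'; rewrite -natrD.
have tri := Delta1_triangle (s - i) T2 (Enc1 (s - i) G) (Enc1 (s - i) G') (fia s f i a).
rewrite [X in (_ <= X + _)%N]Delta1C in tri.
have := leq_trans (Delta1_Enc1_ge (s - i) uniq_T2 neqG szG szG') tri.
rewrite size_T2 -(ler_nat rat); apply: le_trans.
case: (leqP (d - l) ((s - i) * n)) => [le_dn | /ltnW le_nd].
  by rewrite (natrB _ le_dn) natrM.
by rewrite -natrM (le_trans _ (ler0n _ _)) // subr_le0 ler_nat.
Qed.

Lemma goodG_uniq i a G G' :
  goodG T2 n d l s f i a G -> goodG T2 n d l s f i a G' -> G = G'.
Proof.
move=> [szG distG] [szG' distG']; apply/eqP/negPn/negP => neqG.
have := dist_pair_ge i a neqG szG szG'; lra.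
Qed.

Lemma Gia_goodG i a :
  (exists G, goodG T2 n d l s f i a G) -> goodG T2 n d l s f i a (G_ i a).
Proof.
move=> exG; rewrite /Gia; case: excluded_middle_informative => // e.
exact: proj2_sig (constructive_indefinite_description _ e).
Qed.

Lemma size_Gia i a : (size (G_ i a) <= (d - l).+1)%N.
Proof.
have [/Gia_goodG [] //|noG] := classic (exists G, goodG T2 n d l s f i a G).
by rewrite /Gia; case: excluded_middle_informative => // _; rewrite size_poly0.
Qed.

Lemma Gia_eq i a Q : (size Q <= (d - l).+1)%N ->
  ((dist i a Q)%:R : rat) < (1/2) * code_dist i -> G_ i a = Q.
Proof.
move=> szQ distQ; have goodQ : goodG T2 n d l s f i a Q by [].
by apply: goodG_uniq goodQ; apply: Gia_goodG; exists Q.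
Qed.

Lemma wtE a i :
  wt T2 n d l s f a i = Num.min ((dist i a (G_ i a))%:R) ((1/2) * code_dist i).
Proof.
rewrite /wt; congr Num.min.
have n_neq0 : (n%:R : rat) != 0 by rewrite pnatr_eq0 -lt0n.
by field.
Qed.

Lemma wt_le_dist a i Q : (size Q <= (d - l).+1)%N ->
  wt T2 n d l s f a i <= (dist i a Q)%:R.
Proof.
move=> szQ; rewrite wtE.
have [distQ|] := ltP ((dist i a Q)%:R : rat) ((1/2) * code_dist i).
  by rewrite (Gia_eq szQ distQ) ge_min lexx.
by rewrite ge_min => ->; rewrite orbT.
Qed.

(* [G_ i a] and [Q] are distinct codewords, so their distances to the received
   word add up to at least the code distance. *)
Lemma sub_wt_le_dist a i Q : (size Q <= (d - l).+1)%N ->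
  (G_ i a)`_(d - l) != Q`_(d - l) ->
  n%:R * (((s - i)%N)%:R - ((d - l)%N)%:R / n%:R) - wt T2 n d l s f a i
    <= (dist i a Q)%:R.
Proof.
move=> szQ neq_top.
have neqG : G_ i a != Q by apply: contraNneq neq_top => ->.
have -> : n%:R * (((s - i)%N)%:R - ((d - l)%N)%:R / n%:R) = code_dist i.
  have n_neq0 : (n%:R : rat) != 0 by rewrite pnatr_eq0 -lt0n.
  by field.
have [distQ|farQ] := ltP ((dist i a Q)%:R : rat) ((1/2) * code_dist i).
  by rewrite (Gia_eq szQ distQ) eqxx in neqG.
have := dist_pair_ge i a neqG (size_Gia i a) szQ.
rewrite wtE => pair; rewrite lerBlDr -lerBlDl le_min.
apply/andP; split; lra.
Qed.

Variable P : {poly {poly F}}.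
Hypothesis size_P : (size P <= (d - l).+1)%N.

Definition row_dist (a : F) : nat :=
  \sum_(b <- T2) subn s (dmin2 s (fun i j => (f a b i j - Enc2 s P a b i j)%R)).

(* The coefficient of [z1^i] in [P(a + z1, x2)], as a polynomial in [x2]. *)
Definition slice (a : F) (i : nat) : {poly F} :=
  map_poly (fun q : {poly F} => q`_i) (map_poly (fun q => q \Po ('X + a%:P)) P).

Lemma size_slice a i : (size (slice a i) <= (d - l).+1)%N.
Proof. by rewrite (leq_trans (size_poly _ _)) // (leq_trans (size_poly _ _)). Qed.

Lemma coef_slice a i k : (slice a i)`_k = (P`_k \Po ('X + a%:P))`_i.
Proof. by rewrite coef_map_id0 ?coef0 // coef_map_id0 ?comp_poly0. Qed.

Lemma Delta1_slice_le a i : (i < s)%N ->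
  (Delta1 (s - i) T2 (fia s f i a) (Enc1 (s - i) (slice a i)) <= row_dist a)%N.
Proof.
move=> lt_is; apply: leq_sum => b _.
have := dmin2_le_dmin1_row (fun i j => f a b i j - Enc2 s P a b i j) lt_is.
rewrite (@eq_dmin1 _ _ _ (fun j => fia s f i a b j - Enc1 (s - i) (slice a i) b j)).
  by lia.
move=> j lt_j; have lt_ij : (i + j < s)%N by lia.
by rewrite /fia /Enc1 /Enc2 lt_j lt_ij /shift2 coef_comp_poly_XaddCC.
Qed.

Lemma wt_le_row_dist a i : (i < s)%N -> wt T2 n d l s f a i <= (row_dist a)%:R.
Proof.
move=> lt_is; apply: le_trans (wt_le_dist a i (size_slice a i)) _.
by rewrite ler_nat Delta1_slice_le.
Qed.

Lemma sub_wt_le_row_dist a i : (i < s)%N ->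
  (G_ i a)`_(d - l) != (P`_(d - l) \Po ('X + a%:P))`_i ->
  n%:R * (((s - i)%N)%:R - ((d - l)%N)%:R / n%:R) - wt T2 n d l s f a i
    <= (row_dist a)%:R.
Proof.
move=> lt_is neq_top; rewrite -coef_slice in neq_top.
apply: le_trans (sub_wt_le_dist (size_slice a i) neq_top) _.
by rewrite ler_nat Delta1_slice_le.
Qed.

End UniqueDecoding.

Lemma sum_partition_ord (I : Type) (V : nmodType) (xs : seq I) (m : nat)
    (L : I -> nat) (G : I -> V) : (forall x, (L x < m)%N) ->
  \sum_(i < m) \sum_(x <- xs | L x == i) G x = \sum_(x <- xs) G x.
Proof.
move=> L_lt; rewrite (exchange_big_dep xpredT) //=; apply: eq_bigr => x _.
by rewrite (big_pred1 (Ordinal (L_lt x))).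
Qed.

Section Gamma.
Variables (F : fieldType) (T1 T2 : seq F) (n d l s r : nat).
Variables (f : F -> F -> nat -> nat -> F) (R : {poly F}).

Local Notation L a := (agreeLen T2 n d l s r f R a).
Local Notation w a i := (wt T2 n d l s f a i).

Lemma agreeLen_le a : (L a <= r)%N.
Proof. by apply/bigmax_leqP => j _; rewrite -ltnS ltn_ord. Qed.

Lemma gfun_agreeLen_neq a : (L a < r)%N ->
  gfun T2 n d l s r f a (L a) != (R \Po ('X + a%:P))`_(L a).
Proof.
rewrite /agreeLen (bigop.bigmax_eq_arg ord0); last by apply/forallP => [[]].
case: arg_maxnP => [|j /forallP agree max_j]; first by apply/forallP => [[]].
move=> lt_jr; apply/negP => /eqP eq_j.
have lt_j1 : (j.+1 < r.+1)%N by [].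
suff /max_j : [forall k : 'I_(Ordinal lt_j1), gfun T2 n d l s r f a k ==
                                     (R \Po ('X + a%:P))`_k].
  by rewrite /geq /= ltnn.
apply/forallP => -[k /=]; rewrite ltnS leq_eqVlt => /orP[/eqP -> | lt_kj].
  by rewrite eq_j.
exact: (agree (Ordinal lt_kj)).
Qed.

Lemma maxprev_le a i (x : rat) : (0 < i)%N ->
  (forall j, (j < i)%N -> w a j <= x) -> maxprev T2 n d l s f a i <= x.
Proof.
move=> i_gt0 le_w; apply: bigmax_le => [|j _]; first exact: le_w.
exact: le_w (ltn_ord j).
Qed.

Lemma Gamma_le_sum (D : F -> nat) :
  (forall a j, (j < r)%N -> w a j <= (D a)%:R) ->
  (forall a, (L a < r)%N ->
     n%:R * (((s - L a)%N)%:R - ((d - l)%N)%:R / n%:R) - w a (L a) <= (D a)%:R) ->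
  Gamma T1 T2 n d l s r f R <= \sum_(a <- T1) (D a)%:R.
Proof.
move=> le_w le_defect.
have le_prev a i : (0 < i)%N -> (i <= r)%N -> maxprev T2 n d l s f a i <= (D a)%:R.
  move=> i_gt0 le_ir; apply: maxprev_le => // j lt_ji.
  exact: le_w (leq_trans lt_ji le_ir).
rewrite -(@sum_partition_ord _ _ T1 r.+1 (fun a => L a)); last first.
  by move=> a; rewrite ltnS agreeLen_le.
rewrite big_ord_recr /=; apply: lerD.
- apply: ler_sum => i _; apply: ler_sum => a /eqP La /=.
  have lt_Lr : (L a < r)%N by rewrite La ltn_ord.
  case: eqP => [_|/eqP i_neq0]; first by rewrite -La; exact: le_defect.
  by rewrite ge_max -La le_defect //= La le_prev // ?lt0n // ltnW.
- apply: ler_sum => a _; case: eqP => [_|/eqP r_neq0]; first exact: ler0n.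
  by apply: le_prev; rewrite ?lt0n.
Qed.

End Gamma.

Unset Implicit Arguments.
Theorem lemma7p1 (F : fieldType) (T1 T2 : seq F) (n d l s r : nat)
  (f : F -> F -> nat -> nat -> F) (P : {poly {poly F}}) :
  uniq T1 -> uniq T2 -> size T1 = n -> size T2 = n -> (0 < n)%N ->
  (l <= d)%N -> (r + (d - l) %/ n)%N = s ->
  (* f takes values in F_{<s}[z1,z2] *)
  (forall a b i j, a \in T1 -> b \in T2 -> (s <= i + j)%N -> f a b i j = 0) ->
  (* P = sum_{i=l}^d P_i(x1) x2^{d-i}, deg P_i <= i *)
  (size P <= (d - l).+1)%N ->
  (forall k, (k <= d)%N -> (size (P`_k)%R <= (d - k).+1)%N) ->
  ((Delta2 s T1 T2 f (Enc2 s P))%:R : rat) < (1/2) * n%:R ^+ 2 * (s%:R - d%:R / n%:R) ->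
  Gamma T1 T2 n d l s r f P`_(d - l) <= (Delta2 s T1 T2 f (Enc2 s P))%:R /\
  ((Delta2 s T1 T2 f (Enc2 s P))%:R : rat) < (1/2) * n%:R ^+ 2 * (s%:R - d%:R / n%:R).
Proof.
move=> _ uniq_T2 _ size_T2 n_gt0 _ r_s _ size_P _ lt_Delta; split=> //.
have le_rs : (r <= s)%N by rewrite -r_s leq_addr.
rewrite /Delta2 natr_sum; apply: Gamma_le_sum => [a j lt_jr | a lt_Lr].
  by apply: wt_le_row_dist => //; exact: leq_trans lt_jr le_rs.
apply: sub_wt_le_row_dist => //; first exact: leq_trans lt_Lr le_rs.
by have := gfun_agreeLen_neq lt_Lr; rewrite /gfun lt_Lr.
Qed.
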